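(* Let $X$, $Y_k$ ($k\in\mathbb N$) and norms $\|\cdot\|_{X\oplus Y_k}$ be as in the generalized $\ell^2$-sum setting. Let $X_1,X_2$ be subspaces of $X$ with $X=X_1\oplus X_2$, and let $c>0$. If for every $k\in\mathbb N$ $$\|x_1+x_2+y_k\|_{X\oplus Y_k}\ge\|x_1\|_X+c\|x_2+y_k\|_{X\oplus Y_k},\qquad x_1\in X_1,\ x_2\in X_2,\ y_k\in Y_k,$$ then $$\Big\|x_1+x_2+\sum_ky_k\Big\|_\Sigma\ge\|x_1\|_X+c\Big\|x_2+\sum_ky_k\Big\|_\Sigma$$ for every $x_1+x_2+\sum_ky_k\in\Sigma(X\oplus Y_k)$ with $x_1\in X_1$, $x_2\in X_2$, $y_k\in Y_k$.
   Context: Setting: $(X,\|\cdot\|_X)$ and $(Y_k,\|\cdot\|_{Y_k})$, $k\in\mathbb N$, are Banach spaces; for each $k$, $\|\cdot\|_{X\oplus Y_k}$ is a norm on $X\oplus Y_k$ coinciding with $\|\cdot\|_X$ on $X$ and with $\|\cdot\|_{Y_k}$ on $Y_k$, and monotone: $\|x+y_k\|_{X\oplus Y_k}\ge\|x\|_X$. Duals of direct sums are identified with direct sums of duals via $(x^*+y^* )(x+y)=x^*(x)+y^*(y)$. $\Lambda(X\oplus Y_k)$ is the set of functionals $x^*+\sum_k\alpha_ky_k^*$ with $x^*\in X^*$, $y_k^*\in Y_k^*$, $\|x^*+y_k^*\|_{X\oplus Y_k}\le1$ for all $k$, $0\le\alpha_k\le1$, $\sum\alpha_k^2\le1$. $\Sigma(X\oplus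 Y_k)=\{x+y_1+y_2+\dots:x\in X,y_k\in Y_k,\sum\|y_k\|_{Y_k}^2<\infty\}$ with $\|z\|_\Sigma=\sup\{|z^*(z)|:z^*\in\Lambda(X\oplus Y_k)\}$. *)

From HB Require Import structures.
From mathcomp Require Import all_boot all_order all_algebra.
From mathcomp Require Import all_classical all_reals all_analysis.
Set Implicit Arguments. Unset Strict Implicit. Unset Printing Implicit Defensive.
Import Order.TTheory GRing.Theory Num.Theory.
Import numFieldNormedType.Exports.
Local Open Scope classical_set_scope.
Local Open Scope ring_scope.

Section Defs.
Variable R : realType.

Definition is_subspace (V : lmodType R) (A : set V) : Prop :=
  A 0 /\ (forall a b, A a -> A b -> A (a + b)) /\ (forall (r : R) a, A a -> A (r *: a)).

Definition direct_sum_decomp (V : lmodType R) (X1 X2 : set V) : Prop :=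
  is_subspace X1 /\ is_subspace X2 /\
  (forall x, exists x1 x2, X1 x1 /\ X2 x2 /\ x = x1 + x2) /\
  (forall x, X1 x -> X2 x -> x = 0).

(* A norm N on X (+) Y (N x y = ||x + y||), coinciding with the given norms on
   X and on Y, and monotone: ||x + y|| >= ||x||. *)
Definition sum_norm (X Y : normedModType R) (N : X -> Y -> R) : Prop :=
  (forall x x' y y', N (x + x') (y + y') <= N x y + N x' y') /\
  (forall (a : R) x y, N (a *: x) (a *: y) = `|a| * N x y) /\
  (forall x y, N x y = 0 -> x = 0 /\ y = 0) /\
  (forall x, N x 0 = `|x|) /\
  (forall y, N 0 y = `|y|) /\
  (forall x y, `|x| <= N x y).

Definition is_functional (V : normedModType R) (f : V -> R) : Prop :=
  (forall (a : R) u v, f (a *: u + v) = a * f u + f v) /\ continuous f.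

Definition l2sum_setting (X : completeNormedModType R)
  (Y : nat -> completeNormedModType R) (N : forall k, X -> Y k -> R) : Prop :=
  forall k, sum_norm (N k).

(* (xs, (ys k), (alpha k)) represents the functional xs + sum_k alpha_k ys_k
   belonging to Lambda(X (+) Y_k): dual norm of xs + ys_k on X(+)Y_k is <= 1 for all k
   (written out as the dual norm bound), 0 <= alpha_k <= 1, sum alpha_k^2 <= 1. *)
Definition in_Lambda (X : completeNormedModType R)
  (Y : nat -> completeNormedModType R) (N : forall k, X -> Y k -> R)
  (xs : X -> R) (ys : forall k, Y k -> R) (alpha : nat -> R) : Prop :=
  is_functional xs /\ (forall k, is_functional (ys k)) /\
  (forall k x y, `|xs x + ys k y| <= N k x y) /\
  (forall k, 0 <= alpha k <= 1) /\
  (\sum_(k <oo) ((alpha k) ^+ 2)%:E <= 1)%E.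

(* z = x + y_1 + y_2 + ... lies in Sigma(X (+) Y_k). *)
Definition in_Sigma (X : completeNormedModType R)
  (Y : nat -> completeNormedModType R) (x : X) (y : forall k, Y k) : Prop :=
  (\sum_(k <oo) (`|y k| ^+ 2)%:E < +oo)%E.

Definition Lambda_eval (X : completeNormedModType R)
  (Y : nat -> completeNormedModType R)
  (xs : X -> R) (ys : forall k, Y k -> R) (alpha : nat -> R)
  (x : X) (y : forall k, Y k) : R :=
  xs x + limn (series (fun k => alpha k * ys k (y k))).

Definition Sigma_norm (X : completeNormedModType R)
  (Y : nat -> completeNormedModType R) (N : forall k, X -> Y k -> R)
  (x : X) (y : forall k, Y k) : R :=
  sup [set r : R | exists xs ys alpha,
         in_Lambda N xs ys alpha /\ r = `|Lambda_eval xs ys alpha x y| ].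

End Defs.

From HB Require Import structures.
From mathcomp Require Import all_boot all_order all_algebra.
From mathcomp Require Import all_classical all_reals all_analysis.
From mathcomp Require Import lra ring.
Set Implicit Arguments.
Unset Strict Implicit.
Unset Printing Implicit Defensive.
Import Order.TTheory GRing.Theory Num.Theory.
Import numFieldNormedType.Exports.
Local Open Scope classical_set_scope.
Local Open Scope ring_scope.

(* Let z* = x* + sum_k a_k y_k* be in Lambda and L = z*(x2 + sum_k y_k).  Take a
   norming functional g for x1 (Hahn-Banach, obtained from a minimal sublinear
   functional via Zorn's lemma), the projections P1, P2 of X = X1 (+) X2, and
   c' = c sgn L.  The hypothesis makes u |-> g(P1 u) + c' x*(P2 u) together with
   the c' y_k* again a functional in Lambda, and its value at x1 + x2 + sum_k y_k
   is |x1| + c |L|.  Taking the supremum over z* gives the inequality. *)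

Section LinearFunctional.
Variables (R : realType) (V : lmodType R) (f : V -> R).
Hypothesis f_lin : forall (a : R) u v, f (a *: u + v) = a * f u + f v.

Lemma linear_fun0 : f 0 = 0.
Proof. by have := f_lin (-1) 0 0; rewrite scaler0 addr0 mulN1r addNr. Qed.

Lemma linear_funD u v : f (u + v) = f u + f v.
Proof. by have := f_lin 1 u v; rewrite scale1r mul1r. Qed.

Lemma linear_funZ a u : f (a *: u) = a * f u.
Proof. by have := f_lin a u 0; rewrite !addr0 linear_fun0 addr0. Qed.

Lemma linear_funB u v : f (u - v) = f u - f v.
Proof. by rewrite linear_funD -scaleN1r linear_funZ mulN1r. Qed.

End LinearFunctional.

Lemma bounded_linear_is_functional (R : realType) (V : normedModType R)
    (f : V -> R) (C : R) :
  (forall (a : R) u v, f (a *: u + v) = a * f u + f v) -> 0 < C ->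
  (forall u, `|f u| <= C * `|u|) -> is_functional f.
Proof.
move=> f_lin C0 f_le; split => // x.
apply/(@cvgrPdist_lt _ _ _ (nbhs x)) => e e0; near=> z.
rewrite -linear_funB // (le_lt_trans (f_le _)) // -ltr_pdivlMl //.
by near: z; apply: cvgr_dist_lt => //; rewrite mulr_gt0 ?invr_gt0.
Unshelve. all: by end_near. Qed.

Section Sublinear.
Variables (R : realType) (V : lmodType R).

Definition sublinear (q : V -> R) :=
  (forall x y, q (x + y) <= q x + q y) /\
  (forall (a : R) x, 0 <= a -> q (a *: x) <= a * q x).

Lemma sublinear0 q : sublinear q -> q 0 = 0.
Proof.
move=> [qD qZ]; apply/eqP; rewrite eq_le; apply/andP; split.
  by have := qZ 0 0 (lexx _); rewrite scale0r mul0r.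
by have := qD 0 0; rewrite addr0 -{1}(addr0 (q 0)) lerD2l.
Qed.

Lemma sublinearZ q a x : sublinear q -> 0 <= a -> q (a *: x) = a * q x.
Proof.
move=> sq; rewrite le_eqVlt => /orP[/eqP<-|a0].
  by rewrite scale0r mul0r sublinear0.
apply/eqP; rewrite eq_le (sq.2 _ _ (ltW a0)) /=.
have := sq.2 a^-1 (a *: x); rewrite invr_ge0 ltW // scalerA mulVf ?gt_eqF // scale1r.
by move=> /(_ isT); rewrite -(ler_pM2l a0) mulrA mulfV ?gt_eqF // mul1r.
Qed.

Lemma sublinear_oppr_le q x : sublinear q -> - q (- x) <= q x.
Proof.
by move=> sq; have := sq.1 x (- x); rewrite subrr sublinear0 // -lerBlDr add0r.
Qed.

(* The one-dimensional extension step of Hahn-Banach: for [b <= q y],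
   [tilt q y b] is a sublinear minorant of [q] with value at most [- b] at [- y]. *)
Definition tilt_set (q : V -> R) (y : V) (b : R) (x : V) :=
  [set r : R | exists2 t : R, 0 <= t & r = q (x + t *: y) - t * b].
Definition tilt (q : V -> R) (y : V) (b : R) (x : V) := inf (tilt_set q y b x).

Section Tilt.
Variables (q : V -> R) (y : V) (b : R).
Hypotheses (sq : sublinear q) (bq : b <= q y).

Lemma tilt_set_lbound x : lbound (tilt_set q y b x) (- q (- x)).
Proof.
move=> r [t t0 ->]; have := sq.1 (x + t *: y) (- x).
rewrite addrC addKr sublinearZ // => H.
have := ler_wpM2l t0 bq; lra.
Qed.

Lemma tilt_set_neq0 x : tilt_set q y b x !=set0.
Proof. by exists (q (x + 0 *: y) - 0 * b); exists 0. Qed.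

Lemma tilt_le x {t : R} : 0 <= t -> tilt q y b x <= q (x + t *: y) - t * b.
Proof.
move=> t0; apply: ge_inf; first by exists (- q (- x)); exact: tilt_set_lbound.
by exists t.
Qed.

Lemma tilt_le_self x : tilt q y b x <= q x.
Proof. by have := tilt_le x (lexx 0); rewrite scale0r addr0 mul0r subr0. Qed.

Lemma tilt_oppr_le : tilt q y b (- y) <= - b.
Proof.
by have := tilt_le (- y) ler01; rewrite scale1r addNr sublinear0 // mul1r sub0r.
Qed.

Lemma sublinear_tilt : sublinear (tilt q y b).
Proof.
split=> [x x'|a x].
  have H s t : 0 <= s -> 0 <= t ->
      tilt q y b (x + x') <= (q (x + s *: y) - s * b) + (q (x' + t *: y) - t * b).
    move=> s0 t0; apply: (le_trans (tilt_le _ (addr_ge0 s0 t0))).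
    rewrite addrACA -opprD -mulrDl lerD2r scalerDl addrACA; exact: sq.1.
  rewrite -lerBlDr; apply: (@lb_le_inf _ (tilt_set q y b x)).
    exact: tilt_set_neq0.
  move=> r [s s0 ->]; rewrite lerBlDr [_ + tilt _ _ _ x']addrC -lerBlDr.
  apply: (@lb_le_inf _ (tilt_set q y b x')); first exact: tilt_set_neq0.
  by move=> r' [t t0 ->]; rewrite lerBlDr [_ + (q _ - _)]addrC; exact: H.
rewrite le_eqVlt => /orP[/eqP<-|a0].
  by rewrite scale0r mul0r; have := tilt_le_self 0; rewrite (sublinear0 sq).
rewrite -ler_pdivrMl //; apply: (@lb_le_inf _ (tilt_set q y b x)).
  exact: tilt_set_neq0.
move=> r [t t0 ->]; rewrite ler_pdivrMl //.
have := tilt_le (a *: x) (mulr_ge0 (ltW a0) t0).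
by rewrite -scalerA -scalerDr (sublinearZ _ sq (ltW a0)) mulrBr mulrA.
Qed.

End Tilt.
Arguments tilt_le_self {q y b}.
Arguments tilt_oppr_le {q y b}.
Arguments sublinear_tilt {q y b}.

Lemma minimal_sublinear_linear q : sublinear q ->
    (forall p, sublinear p -> (forall x, p x <= q x) -> p = q) ->
  forall (a : R) u v, q (a *: u + v) = a * q u + q v.
Proof.
move=> sq qmin.
have qN y : q (- y) = - q y.
  have tq : tilt q y (q y) = q.
    by apply: qmin; [exact: sublinear_tilt | exact: tilt_le_self].
  apply/eqP; rewrite eq_le -lerNl sublinear_oppr_le // andbT.
  by have := tilt_oppr_le sq (lexx (q y)); rewrite tq.
have qZ a u : q (a *: u) = a * q u.
  have [a0|a0] := leP 0 a; first exact: sublinearZ.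
  rewrite -(opprK a) scaleNr qN sublinearZ ?oppr_ge0 ?ltW //; lra.
have qD u v : q (u + v) = q u + q v.
  apply/eqP; rewrite eq_le sq.1 /=.
  have := sq.1 (- u) (- v); rewrite -opprD !qN; lra.
by move=> a u v; rewrite qD qZ.
Qed.

End Sublinear.

Section NormingFunctional.
Variables (R : realType) (X : normedModType R) (x0 : X).

(* A linear such [q] is a norming functional for [x0]. *)
Definition norming_sublinear (q : X -> R) :=
  [/\ sublinear q, forall x, q x <= `|x| & q (- x0) <= - `|x0|].

Lemma sublinear_norm : sublinear (fun x : X => `|x|).
Proof. by split=> [x y|a x a0]; [exact: ler_normD | rewrite normrZ ger0_norm]. Qed.

Lemma norming_sublinear_tilt_norm : norming_sublinear (tilt (fun x => `|x|) x0 `|x0|).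
Proof.
split; first exact: sublinear_tilt sublinear_norm (lexx _).
  by move=> x; exact: tilt_le_self sublinear_norm (lexx _) x.
exact: tilt_oppr_le sublinear_norm (lexx _).
Qed.

Lemma norming_sublinear_ge q x : norming_sublinear q -> - `|x| <= q x.
Proof.
move=> [sq qn _]; apply: le_trans (sublinear_oppr_le x sq).
by rewrite lerN2 -(normrN x); exact: qn.
Qed.

Lemma exists_minimal_norming_sublinear : exists2 q, norming_sublinear q &
  forall p, sublinear p -> (forall x, p x <= q x) -> p = q.
Proof.
pose T := {q : X -> R | norming_sublinear q}.
pose below (s t : T) : bool := `[< forall x, sval t x <= sval s x >].
have [[q nq] qmin] : exists t : T, forall s : T, below t s -> s = t.
  apply: Zorn.
  - by move=> t; apply/asboolP => x.
  - move=> r s t /asboolP H1 /asboolP H2; apply/asboolP => x.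
    exact: le_trans (H2 x) (H1 x).
  - move=> [s ps] [t pt] /asboolP H1 /asboolP H2; apply: eq_exist.
    by apply: funext => x; apply/eqP; rewrite eq_le H1 H2.
  move=> A Atot; have [[a Aa]|A0] := pselect (exists a, A a); last first.
    exists (exist _ _ norming_sublinear_tilt_norm) => s As.
    by exfalso; apply: A0; exists s.
  pose S x := [set r : R | exists2 s, A s & r = sval s x].
  pose Q x := inf (S x).
  have Sn0 x : S x !=set0 by exists (sval a x); exists a.
  have Slb x : lbound (S x) (- `|x|).
    by move=> r [s _ ->]; exact: norming_sublinear_ge (svalP s).
  have Qle x s : A s -> Q x <= sval s x.
    by move=> As; apply: ge_inf; [exists (- `|x|)|exists s].
  have Qge x m : (forall s, A s -> m <= sval s x) -> m <= Q x.
    by move=> H; apply: lb_le_inf => // r [s As ->]; exact: H.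
  suff nQ : norming_sublinear Q.
    by exists (exist _ Q nQ) => s As; apply/asboolP => x /=; exact: Qle.
  have [_ Qn QN] := svalP a.
  split; [split| |].
  - move=> x y; rewrite -lerBlDr; apply: (Qge) => s As.
    rewrite lerBlDr [_ + Q y]addrC -lerBlDr; apply: (Qge) => s' As'.
    rewrite lerBlDr [_ + sval s x]addrC.
    have [[sD _] _ _] := svalP s; have [[s'D _] _ _] := svalP s'.
    have [/asboolP H|/asboolP H] := Atot s s' As As'.
    + by apply: le_trans (Qle _ _ As') _; apply: le_trans (s'D x y) _; rewrite lerD2r H.
    + by apply: le_trans (Qle _ _ As) _; apply: le_trans (sD x y) _; rewrite lerD2l H.
  - move=> c x; rewrite le_eqVlt => /orP[/eqP<-|c0].
      rewrite scale0r mul0r; apply: le_trans (Qle _ _ Aa) _.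
      by have [sa _ _] := svalP a; rewrite (sublinear0 sa).
    rewrite -ler_pdivrMl //; apply: (Qge) => s As; rewrite ler_pdivrMl //.
    have [[_ sZ] _ _] := svalP s.
    exact: le_trans (Qle _ _ As) (sZ c x (ltW c0)).
  - by move=> x; apply: le_trans (Qle _ _ Aa) (Qn x).
  - exact: le_trans (Qle _ _ Aa) QN.
exists q => // p sp pq.
have [_ qn qN] := nq.
have np : norming_sublinear p.
  by split=> // [x|]; [exact: le_trans (pq x) (qn x) | exact: le_trans (pq _) qN].
have := qmin (exist _ p np); rewrite /below /=.
by move=> /(_ (introT (asboolP _) pq)) [].
Qed.

Lemma exists_norming_functional : exists g : X -> R,
  [/\ forall (a : R) u v, g (a *: u + v) = a * g u + g v,
      forall u, `|g u| <= `|u| & g x0 = `|x0|].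
Proof.
have [q [sq qn qN] qmin] := exists_minimal_norming_sublinear.
have q_lin := minimal_sublinear_linear sq qmin.
have qN' u : q (- u) = - q u by rewrite -scaleN1r linear_funZ // mulN1r.
exists q; split=> // [u|].
  by rewrite ler_norml qn andbT lerNl -qN' -(normrN u); exact: qn.
by apply/eqP; rewrite eq_le qn /=; move: qN; rewrite qN' lerN2.
Qed.

End NormingFunctional.

Lemma nneseries_partial_le (R : realType) (u : nat -> R) n : (forall k, 0 <= u k) ->
  ((\sum_(0 <= k < n) u k)%:E <= \sum_(k <oo) (u k)%:E)%E.
Proof.
move=> u0; rewrite -sumEFin; apply: nneseries_lim_ge => k _ _.
by rewrite lee_fin.
Qed.

(* Young's inequality [a w <= (a^2 + w^2) / 2] termwise gives absolute
   convergence together with the bound. *)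
Lemma cvg_series_l2_bound (R : realType) (al w nw : nat -> R) (M : R) :
  (forall k, `|w k| <= nw k) -> (forall k, 0 <= al k) ->
  (forall n, \sum_(0 <= k < n) al k ^+ 2 <= 1) ->
  (forall n, \sum_(0 <= k < n) nw k ^+ 2 <= M) ->
  cvgn (series (fun k => al k * w k)) /\
  `|limn (series (fun k => al k * w k))| <= (1 + M) / 2.
Proof.
move=> wn al0 al_le nw_le; set a := fun k => al k * w k.
have a_le k : `|a k| <= (al k ^+ 2 + nw k ^+ 2) / 2.
  rewrite /a normrM (ger0_norm (al0 k)).
  have nw0 : 0 <= nw k by exact: le_trans (normr_ge0 _) (wn k).
  have := ler_wpM2l (al0 k) (wn k).
  have := sqr_ge0 (al k - nw k); nra.
have partial_le n : [normed series a] n <= (1 + M) / 2.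
  rewrite /series /=; apply: le_trans (ler_sum _ (fun k _ => a_le k)) _.
  rewrite -mulr_suml big_split /= ler_pM2r ?invr_gt0 //.
  exact: lerD (al_le n) (nw_le n).
have a_abs : cvgn [normed series a].
  apply: nondecreasing_is_cvgn.
    by apply: nondecreasing_series => k _ _; exact: normr_ge0.
  by exists ((1 + M) / 2) => _ [n _ <-]; exact: partial_le.
split; first exact: normed_cvg.
apply: le_trans (lim_series_norm a_abs) _.
by apply: limr_le => //; exact: nearW.
Qed.

Section SigmaNorm.
Variables (R : realType) (X : completeNormedModType R)
  (Y : nat -> completeNormedModType R) (N : forall k, X -> Y k -> R).
Hypothesis HN : l2sum_setting N.

Lemma in_Lambda_bounds xs ys al : in_Lambda N xs ys al ->
  [/\ forall x, `|xs x| <= `|x|, forall k v, `|ys k v| <= `|v|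
    & forall n, \sum_(0 <= k < n) al k ^+ 2 <= 1].
Proof.
move=> [[xs_lin _] [ys_fun [xys_le [_ al_le]]]].
have ys0 k : ys k 0 = 0 by have [ys_lin _] := ys_fun k; exact: linear_fun0.
split.
- move=> x; have := xys_le 0%N x 0; rewrite ys0 addr0.
  by have [_ [_ [_ [-> _]]]] := HN 0%N.
- move=> k v; have := xys_le k 0 v; rewrite linear_fun0 // add0r.
  by have [_ [_ [_ [_ [-> _]]]]] := HN k.
- move=> n; rewrite -lee_fin; apply: le_trans al_le.
  by apply: nneseries_partial_le => k; exact: sqr_ge0.
Qed.

Lemma in_Sigma_partial_bounded (x : X) (y : forall k, Y k) : in_Sigma x y ->
  exists M, forall n, \sum_(0 <= k < n) `|y k| ^+ 2 <= M.
Proof.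
rewrite /in_Sigma => y_fin.
have partial_le n := nneseries_partial_le n (fun k => sqr_ge0 `|y k|).
have := partial_le 0%N; rewrite big_geq // => sum_ge0.
have [r Sr] : exists r : R, (\sum_(k <oo) (`|y k| ^+ 2)%:E)%E = r%:E.
  by move: y_fin sum_ge0; case: (\sum_(k <oo) _)%E => // r _ _; exists r.
by exists r => n; rewrite -lee_fin -Sr; exact: partial_le.
Qed.

Lemma Lambda_eval_cvg_bound (x : X) (y : forall k, Y k) M xs ys al :
  in_Lambda N xs ys al -> (forall n, \sum_(0 <= k < n) `|y k| ^+ 2 <= M) ->
  cvgn (series (fun k => al k * ys k (y k))) /\
  `|Lambda_eval xs ys al x y| <= `|x| + (1 + M) / 2.
Proof.
move=> HL y_le; have [xs_le ys_le al_le] := in_Lambda_bounds HL.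
have al0 k : 0 <= al k by have [_ [_ [_ [/(_ k) /andP[] ]]]] := HL.
have [cv bd] := cvg_series_l2_bound (fun k => ys_le k (y k)) al0 al_le y_le.
split=> //; apply: le_trans (ler_normD _ _) _.
exact: lerD (xs_le x) bd.
Qed.

Lemma in_Lambda0 : in_Lambda N (fun _ => 0) (fun k _ => 0) (fun _ => 0).
Proof.
have zero_fun (V : normedModType R) : is_functional (fun _ : V => (0 : R)).
  by split=> [*|z]; [rewrite mulr0 addr0 | exact: cvg_cst].
split; first exact: zero_fun.
split; first by move=> k; exact: zero_fun.
split.
  move=> k u v; rewrite addr0 normr0.
  by have [_ [_ [_ [_ [_ H]]]]] := HN k; exact: le_trans (normr_ge0 _) (H u v).
split; first by move=> k; rewrite lexx ler01.
by rewrite eseries0 // => i _ _; rewrite expr0n.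
Qed.

Lemma Sigma_norm_ge (x : X) (y : forall k, Y k) xs ys al : in_Sigma x y ->
  in_Lambda N xs ys al -> `|Lambda_eval xs ys al x y| <= Sigma_norm N x y.
Proof.
move=> /in_Sigma_partial_bounded [M y_le] HL; apply: ub_le_sup; last first.
  by exists xs, ys, al.
exists (`|x| + (1 + M) / 2) => _ [xs' [ys' [al' [HL' ->]]]].
by have [] := Lambda_eval_cvg_bound x HL' y_le.
Qed.

Lemma Sigma_norm_le (x : X) (y : forall k, Y k) m :
  (forall xs ys al, in_Lambda N xs ys al -> `|Lambda_eval xs ys al x y| <= m) ->
  Sigma_norm N x y <= m.
Proof.
move=> eval_le; apply: ge_sup; last by move=> _ [xs [ys [al [HL ->]]]]; exact: eval_le.
by exists `|Lambda_eval (fun _ => 0) (fun k _ => 0) (fun _ => 0) x y|;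
   exists (fun _ => 0), (fun k _ => 0), (fun _ => 0); split; first exact: in_Lambda0.
Qed.

End SigmaNorm.

Section DirectSum.
Variables (R : realType) (V : lmodType R) (X1 X2 : set V).
Hypothesis decX : direct_sum_decomp X1 X2.

Lemma direct_sum_unique a1 a2 b1 b2 : X1 a1 -> X2 a2 -> X1 b1 -> X2 b2 ->
  a1 + a2 = b1 + b2 -> a1 = b1 /\ a2 = b2.
Proof.
have [[_ [X1D X1Z]] [[_ [X2D X2Z]] [_ X12]]] := decX.
move=> Xa1 Xa2 Xb1 Xb2 E.
have E' : a1 - b1 = b2 - a2.
  by apply/eqP; rewrite subr_eq addrAC [b2 + b1]addrC -E addrK.
have /eqP : a1 - b1 = 0.
  apply: X12; first by rewrite -scaleN1r; apply: X1D => //; exact: X1Z.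
  by rewrite E' -scaleN1r; apply: X2D => //; exact: X2Z.
rewrite subr_eq0 => /eqP a1b1; split=> //.
by move: E; rewrite a1b1 => /addrI.
Qed.

Lemma direct_sum_projections : exists P1 P2 : V -> V,
  [/\ forall u, X1 (P1 u) /\ X2 (P2 u), forall u, P1 u + P2 u = u,
      forall (a : R) u v,
        P1 (a *: u + v) = a *: P1 u + P1 v /\ P2 (a *: u + v) = a *: P2 u + P2 v
    & forall x1 x2, X1 x1 -> X2 x2 -> P1 (x1 + x2) = x1 /\ P2 (x1 + x2) = x2].
Proof.
have [[_ [X1D X1Z]] [[_ [X2D X2Z]] [decomp _]]] := decX.
have [P1 /choice[P2 HP]] := choice decomp.
have PX u : X1 (P1 u) /\ X2 (P2 u) by case: (HP u) => ? [].
have P12 u : P1 u + P2 u = u by case: (HP u) => _ [_ /esym].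
exists P1, P2; split=> // [a u v|x1 x2 X1x1 X2x2].
  have [X1u X2u] := PX u; have [X1v X2v] := PX v; have [X1w X2w] := PX (a *: u + v).
  apply: direct_sum_unique X1w X2w _ _ _.
  - by apply: X1D => //; exact: X1Z.
  - by apply: X2D => //; exact: X2Z.
  by rewrite P12 addrACA -scalerDr !P12.
have [X1p X2p] := PX (x1 + x2).
exact: direct_sum_unique X1p X2p X1x1 X2x2 (P12 _).
Qed.

End DirectSum.

Section Transfer.
Variables (R : realType) (X : completeNormedModType R)
  (Y : nat -> completeNormedModType R) (N : forall k, X -> Y k -> R).
Hypothesis HN : l2sum_setting N.
Arguments N : clear implicits.

Lemma in_Lambda_transfer xs ys al (g : X -> R) (P1 P2 : X -> X) (c c' : R) :
  in_Lambda N xs ys al ->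
  (forall (a : R) u v, g (a *: u + v) = a * g u + g v) -> (forall u, `|g u| <= `|u|) ->
  (forall (a : R) u v,
     P1 (a *: u + v) = a *: P1 u + P1 v /\ P2 (a *: u + v) = a *: P2 u + P2 v) ->
  0 < c -> `|c'| = c ->
  (forall k u v, `|P1 u| + c * N k (P2 u) v <= N k u v) ->
  in_Lambda N (fun u => g (P1 u) + c' * xs (P2 u)) (fun k v => c' * ys k v) al.
Proof.
move=> HL g_lin g_le P_lin c0 c'c NP_le.
have [[xs_lin _] [ys_fun [xys_le al_bd]]] := HL.
have [xs_le ys_le _] := in_Lambda_bounds HN HL.
set w := fun u => _.
have w_le k u v : `|w u + c' * ys k v| <= N k u v.
  rewrite /w -addrA -mulrDr; apply: le_trans (ler_normD _ _) _.
  apply: le_trans (NP_le k u v); apply: lerD; first exact: g_le.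
  by rewrite normrM c'c ler_pM2l.
have w_lin a u v : w (a *: u + v) = a * w u + w v.
  by rewrite /w; have [-> ->] := P_lin a u v; rewrite g_lin xs_lin; ring.
split.
  apply: (bounded_linear_is_functional w_lin ltr01) => u.
  have := w_le 0%N u 0; rewrite (linear_fun0 (f := ys 0%N)); last first.
    by have [] := ys_fun 0%N.
  by rewrite mulr0 addr0 mul1r; have [_ [_ [_ [-> _]]]] := HN 0%N.
split.
  move=> k; have [ys_lin _] := ys_fun k.
  apply: (bounded_linear_is_functional _ c0) => [a u v|u].
    by rewrite ys_lin; ring.
  by rewrite normrM c'c ler_pM2l.
by split; [exact: w_le | exact: al_bd].
Qed.

End Transfer.

Theorem lemma2p6 (R : realType) (X : completeNormedModType R)
  (Y : nat -> completeNormedModType R) (N : forall k, X -> Y k -> R)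
  (X1 X2 : set X) (c : R) :
  l2sum_setting N ->
  direct_sum_decomp X1 X2 ->
  0 < c ->
  (forall k x1 x2 (yk : Y k), X1 x1 -> X2 x2 ->
     `|x1| + c * N k x2 yk <= N k (x1 + x2) yk) ->
  forall x1 x2 (y : forall k, Y k), X1 x1 -> X2 x2 ->
    in_Sigma (x1 + x2) y ->
    `|x1| + c * Sigma_norm N x2 y <= Sigma_norm N (x1 + x2) y.
Proof.
move=> HN decX c0 Hc x1 x2 y X1x1 X2x2 y_fin.
have [P1 [P2 [PX P12 P_lin P_id]]] := direct_sum_projections decX.
have [g [g_lin g_le gx1]] := exists_norming_functional x1.
have NP_le k u v : `|P1 u| + c * N k (P2 u) v <= N k u v.
  by have [X1u X2u] := PX u; rewrite -{3}(P12 u); exact: Hc.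
suff : Sigma_norm N x2 y <= (Sigma_norm N (x1 + x2) y - `|x1|) / c.
  by rewrite ler_pdivlMr //; lra.
apply: (Sigma_norm_le HN) => xs ys al HL; rewrite ler_pdivlMr //.
set L := Lambda_eval xs ys al x2 y.
have [c' c'c c'L] : exists2 c', `|c'| = c & c' * L = c * `|L|.
  have [L0|L0] := leP 0 L; first by exists c; [rewrite gtr0_norm | rewrite ger0_norm].
  by exists (- c); [rewrite normrN gtr0_norm | rewrite ltr0_norm // mulrN mulNr].
have HL' := in_Lambda_transfer HN HL g_lin g_le P_lin c0 c'c NP_le.
have [M y_le] := in_Sigma_partial_bounded y_fin.
have [cv _] := Lambda_eval_cvg_bound HN x2 HL y_le.
have := Sigma_norm_ge HN y_fin HL'.
have -> : Lambda_eval (fun u => g (P1 u) + c' * xs (P2 u)) (fun k v => c' * ys k v)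
    al (x1 + x2) y = `|x1| + c * `|L|.
  rewrite /Lambda_eval; have [-> ->] := P_id _ _ X1x1 X2x2.
  rewrite gx1 -c'L /L /Lambda_eval.
  have -> : (fun k => al k * (c' * ys k (y k))) = c' *: (fun k => al k * ys k (y k)).
    by apply: funext => k /=; rewrite mulrCA.
  by rewrite lim_seriesZ // /GRing.scale /=; ring.
by move=> /(le_trans (ler_norm _)); lra.
Qed.
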